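(* Let $T\in L_{aut}(\mathcal B)$ be a shifted hyperbolic operator with transition subspace $E_0=E^-\cap T^{-1}(E^+)$. If $E_0$ is separable (in particular, if $E_0$ is finite dimensional), then $\overline{B(T)}$ is separable.
   Context: $\mathcal B$ is a Banach space. $T$ is generalized hyperbolic if there is a decomposition $\mathcal B=E^-\oplus E^+$ into complementary closed subspaces with $T(E^+)\subset E^+$, $T^{-1}(E^-)\subset E^-$, and $T|_{E^+}$, $T^{-1}|_{E^-}$ uniform contractions; $T$ is shifted hyperbolic if in addition $E_0=E^-\cap T^{-1}(E^+)\ne\{0\}$. $B(T)$ is the set of $x$ for which there exist $K>0$ and strictly increasing sequences of positive integers $(k_n),(m_n)$ with $|T^{k_n}x|<K$ and $|T^{-m_n}x|<K$. *)

From Stdlib Require Import Reals.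
Open Scope R_scope.

Record Banach := {
  car :> Type;
  vzero : car;
  vadd : car -> car -> car;
  vopp : car -> car;
  vscal : R -> car -> car;
  vnorm : car -> R;
  vadd_assoc : forall x y z, vadd x (vadd y z) = vadd (vadd x y) z;
  vadd_comm : forall x y, vadd x y = vadd y x;
  vadd_0 : forall x, vadd x vzero = x;
  vadd_opp : forall x, vadd x (vopp x) = vzero;
  vscal_1 : forall x, vscal 1 x = x;
  vscal_assoc : forall a b x, vscal a (vscal b x) = vscal (a * b) x;
  vscal_distr_l : forall a x y, vscal a (vadd x y) = vadd (vscal a x) (vscal a y);
  vscal_distr_r : forall a b x, vscal (a + b) x = vadd (vscal a x) (vscal b x);
  vnorm_nonneg : forall x, 0 <= vnorm x;
  vnorm_eq0 : forall x, vnorm x = 0 -> x = vzero;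
  vnorm_scal : forall a x, vnorm (vscal a x) = Rabs a * vnorm x;
  vnorm_triangle : forall x y, vnorm (vadd x y) <= vnorm x + vnorm y;
  vcomplete : forall u : nat -> car,
    (forall eps, 0 < eps -> exists N, forall m n, (N <= m)%nat -> (N <= n)%nat ->
        vnorm (vadd (u m) (vopp (u n))) < eps) ->
    exists l, forall eps, 0 < eps -> exists N, forall n, (N <= n)%nat ->
        vnorm (vadd (u n) (vopp l)) < eps
}.

Arguments vzero {_}.
Arguments vadd {_} _ _.
Arguments vopp {_} _.
Arguments vscal {_} _ _.
Arguments vnorm {_} _.

Section Defs.
Variable B : Banach.

Definition dist (x y : B) : R := vnorm (vadd x (vopp y)).

Definition bounded_linear (T : B -> B) : Prop :=
  (forall x y, T (vadd x y) = vadd (T x) (T y)) /\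
  (forall a x, T (vscal a x) = vscal a (T x)) /\
  (exists C, forall x, vnorm (T x) <= C * vnorm x).

Definition is_aut (T Tinv : B -> B) : Prop :=
  bounded_linear T /\ bounded_linear Tinv /\
  (forall x, T (Tinv x) = x) /\ (forall x, Tinv (T x) = x).

Definition converges_to (u : nat -> B) (l : B) : Prop :=
  forall eps, 0 < eps -> exists N, forall n, (N <= n)%nat -> dist (u n) l < eps.

Definition closed_subspace (E : B -> Prop) : Prop :=
  E vzero /\ (forall x y, E x -> E y -> E (vadd x y)) /\
  (forall a x, E x -> E (vscal a x)) /\
  (forall u l, (forall n, E (u n)) -> converges_to u l -> E l).

Definition complementary (E1 E2 : B -> Prop) : Prop :=
  (forall x, E1 x -> E2 x -> x = vzero) /\
  (forall x, exists a b, E1 a /\ E2 b /\ x = vadd a b).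

Definition iter (n : nat) (T : B -> B) (x : B) : B := Nat.iter n T x.

Definition uniform_contraction_on (S : B -> B) (E : B -> Prop) : Prop :=
  exists c t, 0 < c /\ 0 < t < 1 /\
    forall n x, E x -> vnorm (iter n S x) <= c * t ^ n * vnorm x.

Definition generalized_hyperbolic_dec (T Tinv : B -> B) (Em Ep : B -> Prop) : Prop :=
  closed_subspace Em /\ closed_subspace Ep /\ complementary Em Ep /\
  (forall x, Ep x -> Ep (T x)) /\ (forall x, Em x -> Em (Tinv x)) /\
  uniform_contraction_on T Ep /\ uniform_contraction_on Tinv Em.

Definition E0 (T : B -> B) (Em Ep : B -> Prop) (x : B) : Prop := Em x /\ Ep (T x).

Definition shifted_hyperbolic_dec (T Tinv : B -> B) (Em Ep : B -> Prop) : Prop :=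
  generalized_hyperbolic_dec T Tinv Em Ep /\ exists x, E0 T Em Ep x /\ x <> vzero.

Definition BT (T Tinv : B -> B) (x : B) : Prop :=
  exists (K : R) (k m : nat -> nat), 0 < K /\
    (forall n, (1 <= k n)%nat /\ (k n < k (S n))%nat) /\
    (forall n, (1 <= m n)%nat /\ (m n < m (S n))%nat) /\
    (forall n, vnorm (iter (k n) T x) < K) /\
    (forall n, vnorm (iter (m n) Tinv x) < K).

Definition closure (A : B -> Prop) (x : B) : Prop :=
  forall eps, 0 < eps -> exists y, A y /\ dist x y < eps.

(** A subset A is separable: it has a countable dense subset.  (Here A is
    nonempty in all uses, so a sequence suffices.) *)
Definition separable (A : B -> Prop) : Prop :=
  exists d : nat -> B, (forall n, A (d n)) /\
    forall x, A x -> forall eps, 0 < eps -> exists n, dist x (d n) < eps.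

End Defs.

(** The proof has four ingredients, developed in this order.
    - A set is "approximable" if one sequence comes arbitrarily close to each of
      its points; this is stable under subsets, Lipschitz images, sums,
      countable unions and closures, and a nonempty approximable set is separable.
    - By the Baire category theorem, complementary closed subspaces have bounded
      projections (an open-mapping argument for [(a, b) ↦ a + b]).
    - Hence, by uniform contraction, cutting the [E⁺]-part of [T^(-m) x] and then
      the [E⁻]-part of [T^k x], for [m], [k] along the bounded subsequences,
      moves a point [x ∈ B(T)] arbitrarily little into
      [W n = {w | T^(-n) w ∈ E⁻, T^n w ∈ E⁺}].
    - [W n = T^n (U (2n))] where [U j = {y ∈ E⁻ | T^j y ∈ E⁺}] satisfies
      [U 0 = {0}] and [U (j+1) ⊆ E₀ + T⁻¹ (U j)]; so each [W n] is approximable,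
      and therefore so are [B(T)] and its closure, which contains [0]. *)

From Pilot Require Import Defs.
From Stdlib Require Import Reals Lra Lia Cantor ClassicalEpsilon.
Open Scope R_scope.

Arguments vadd_assoc {_}. Arguments vadd_comm {_}. Arguments vadd_0 {_}.
Arguments vadd_opp {_}. Arguments vscal_1 {_}. Arguments vscal_assoc {_}.
Arguments vscal_distr_l {_}. Arguments vscal_distr_r {_}. Arguments vnorm_nonneg {_}.
Arguments vnorm_eq0 {_}. Arguments vnorm_scal {_}. Arguments vnorm_triangle {_}.
Arguments vcomplete {_}.

Local Infix "+ᵥ" := vadd (at level 50, left associativity).
Local Notation "x -ᵥ y" := (vadd x (vopp y)) (at level 50, left associativity).
Local Notation vdist := (Defs.dist _).

Section VectorAlgebra.
Context {B : Banach}.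
Implicit Types a b c d x y z : B.

Lemma add0v x : vzero +ᵥ x = x.
Proof. rewrite vadd_comm; apply vadd_0. Qed.

Lemma addNv x : vopp x +ᵥ x = vzero.
Proof. rewrite vadd_comm; apply vadd_opp. Qed.

Lemma addv_cancel x y z : x +ᵥ y = x +ᵥ z -> y = z.
Proof.
  intro H. rewrite <- (add0v y), <- (add0v z), <- (addNv x), <- !vadd_assoc, H.
  reflexivity.
Qed.

Lemma scal0 x : vscal 0 x = vzero.
Proof.
  apply (addv_cancel (vscal 0 x)). rewrite <- vscal_distr_r, vadd_0. f_equal; ring.
Qed.

Lemma opp_scal x : vopp x = vscal (-1) x.
Proof.
  apply (addv_cancel x). rewrite vadd_opp. rewrite <- (vscal_1 x) at 1.
  rewrite <- vscal_distr_r. replace (1 + -1) with 0 by ring. now rewrite scal0.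
Qed.

Lemma scal_opp (c : R) x : vscal c (vopp x) = vopp (vscal c x).
Proof. rewrite !opp_scal, !vscal_assoc. f_equal. ring. Qed.

Lemma norm0 : vnorm (@vzero B) = 0.
Proof. rewrite <- (scal0 vzero), vnorm_scal, Rabs_R0. ring. Qed.

Lemma norm_opp x : vnorm (vopp x) = vnorm x.
Proof.
  rewrite opp_scal, vnorm_scal, Rabs_left by lra. ring.
Qed.

Lemma opp_add x y : vopp (x +ᵥ y) = vopp x +ᵥ vopp y.
Proof. rewrite !opp_scal. apply vscal_distr_l. Qed.

Lemma opp0 : vopp (@vzero B) = vzero.
Proof. apply (addv_cancel vzero). rewrite vadd_opp, vadd_0. reflexivity. Qed.

Lemma addvK x y : x +ᵥ y -ᵥ y = x.
Proof. rewrite <- vadd_assoc, vadd_opp, vadd_0. reflexivity. Qed.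

Lemma subvK x y : x -ᵥ y +ᵥ y = x.
Proof. rewrite <- vadd_assoc, addNv, vadd_0. reflexivity. Qed.

Lemma addvKl x y : x +ᵥ y -ᵥ x = y.
Proof. rewrite (vadd_comm x y). apply addvK. Qed.

Lemma addvAC x y z : x +ᵥ y +ᵥ z = x +ᵥ z +ᵥ y.
Proof. rewrite <- !vadd_assoc, (vadd_comm y). reflexivity. Qed.

Lemma subv0_eq x y : x -ᵥ y = vzero -> x = y.
Proof. intro H. rewrite <- (subvK x y), H, add0v. reflexivity. Qed.

Lemma sub_add2 a b c d : a +ᵥ b -ᵥ (c +ᵥ d) = (a -ᵥ c) +ᵥ (b -ᵥ d).
Proof.
  rewrite opp_add, <- !vadd_assoc. f_equal. rewrite !vadd_assoc. f_equal.
  apply vadd_comm.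
Qed.

Lemma norm_sub_sym x y : vnorm (x -ᵥ y) = vnorm (y -ᵥ x).
Proof.
  rewrite <- norm_opp, opp_add, vadd_comm. f_equal. f_equal.
  rewrite !opp_scal, vscal_assoc. replace (-1 * -1) with 1 by ring. apply vscal_1.
Qed.

Lemma norm_sub_le x y : vnorm (x -ᵥ y) <= vnorm x + vnorm y.
Proof. rewrite <- (norm_opp y). apply vnorm_triangle. Qed.

Lemma dist_sym x y : vdist x y = vdist y x.
Proof. apply norm_sub_sym. Qed.

Lemma dist_self x : vdist x x = 0.
Proof. unfold Defs.dist. rewrite vadd_opp. apply norm0. Qed.

Lemma dist_tri x y z : vdist x z <= vdist x y + vdist y z.
Proof.
  unfold Defs.dist. replace (x -ᵥ z) with ((x -ᵥ y) +ᵥ (y -ᵥ z)).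
  - apply vnorm_triangle.
  - rewrite vadd_assoc, subvK. reflexivity.
Qed.

Lemma dist_sub_r x y : vdist x (x -ᵥ y) = vnorm y.
Proof.
  rewrite dist_sym. unfold Defs.dist. rewrite addvAC, vadd_opp, add0v. apply norm_opp.
Qed.

Lemma dist_0r x : vdist x vzero = vnorm x.
Proof. unfold Defs.dist. rewrite opp0, vadd_0. reflexivity. Qed.

Lemma dist_add a b c d : vdist (a +ᵥ b) (c +ᵥ d) <= vdist a c + vdist b d.
Proof. unfold Defs.dist. rewrite sub_add2. apply vnorm_triangle. Qed.

Lemma dist_sub a b c d : vdist (a -ᵥ b) (c -ᵥ d) <= vdist a c + vdist b d.
Proof.
  eapply Rle_trans; [apply dist_add|]. unfold Defs.dist at 2.
  rewrite <- opp_add, norm_opp. apply Rle_refl.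
Qed.

End VectorAlgebra.

Section Operators.
Context {B : Banach}.
Implicit Types (A Ainv : B -> B) (E : B -> Prop).

Lemma lin_add A x y : bounded_linear B A -> A (x +ᵥ y) = A x +ᵥ A y.
Proof. intros [H _]. apply H. Qed.

Lemma lin0 A : bounded_linear B A -> A vzero = vzero.
Proof. intros [_ [Hs _]]. rewrite <- (scal0 vzero), Hs, !scal0. reflexivity. Qed.

Lemma lin_sub A x y : bounded_linear B A -> A (x -ᵥ y) = A x -ᵥ A y.
Proof.
  intro HA. rewrite lin_add by exact HA. f_equal.
  destruct HA as [_ [Hs _]]. rewrite !opp_scal. apply Hs.
Qed.

Definition lipschitz A : Prop :=
  exists L, 0 < L /\ forall x y, vdist (A x) (A y) <= L * vdist x y.

Lemma bounded_linear_lipschitz A : bounded_linear B A -> lipschitz A.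
Proof.
  intros [Ha [Hs [C HC]]]. exists (Rmax C 1). split.
  - apply Rlt_le_trans with 1; [lra | apply Rmax_r].
  - intros x y. unfold Defs.dist. rewrite <- lin_sub by (repeat split; eauto).
    eapply Rle_trans; [apply HC|].
    apply Rmult_le_compat_r; [apply vnorm_nonneg | apply Rmax_l].
Qed.

Lemma iter_add m n A x : iter B (m + n) A x = iter B m A (iter B n A x).
Proof. apply Nat.iter_add. Qed.

Lemma iter_succ_r n A x : iter B (S n) A x = iter B n A (A x).
Proof. apply Nat.iter_succ_r. Qed.

Lemma iter_bounded_linear n A : bounded_linear B A -> bounded_linear B (iter B n A).
Proof.
  intro HA. induction n as [|n [Ha [Hs [C HC]]]].
  - split; [|split]; [reflexivity | reflexivity | exists 1; intro; simpl; lra].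
  - destruct HA as [HAa [HAs [D HD]]]. split; [|split].
    + intros x y. simpl. rewrite Ha. apply HAa.
    + intros a x. simpl. rewrite Hs. apply HAs.
    + exists (Rmax D 0 * Rmax C 0). intro x. simpl.
      eapply Rle_trans; [apply HD|]. eapply Rle_trans.
      { apply Rmult_le_compat_r; [apply vnorm_nonneg | apply (Rmax_l D 0)]. }
      rewrite Rmult_assoc. apply Rmult_le_compat_l; [apply Rmax_r|].
      eapply Rle_trans; [apply HC|].
      apply Rmult_le_compat_r; [apply vnorm_nonneg | apply Rmax_l].
Qed.

Lemma is_aut_sym A Ainv : is_aut B A Ainv -> is_aut B Ainv A.
Proof. intros [H1 [H2 [H3 H4]]]. exact (conj H2 (conj H1 (conj H4 H3))). Qed.

Lemma iter_inv_r n A Ainv x : is_aut B A Ainv -> iter B n A (iter B n Ainv x) = x.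
Proof.
  intros [_ [_ [HAA _]]]. revert x; induction n as [|n IH]; intro x; [reflexivity|].
  rewrite iter_succ_r. simpl. rewrite HAA. apply IH.
Qed.

Lemma sub_add E x y : closed_subspace B E -> E x -> E y -> E (x +ᵥ y).
Proof. intros [_ [H _]]. auto. Qed.

Lemma sub_sub E x y : closed_subspace B E -> E x -> E y -> E (x -ᵥ y).
Proof.
  intros HE Hx Hy. apply sub_add; auto. rewrite opp_scal. apply HE, Hy.
Qed.

Lemma iter_invariant n A E x : (forall y, E y -> E (A y)) -> E x -> E (iter B n A x).
Proof. intros HA Hx. induction n; simpl; auto. Qed.

Lemma complementary_sym E1 E2 : Defs.complementary B E1 E2 -> Defs.complementary B E2 E1.
Proof.
  intros [Hdisj Hspan]. split.
  - intros x H2 H1. auto.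
  - intro x. destruct (Hspan x) as [a [b [Ha [Hb ->]]]].
    exists b, a. rewrite vadd_comm. auto.
Qed.

End Operators.

Section CountableApproximation.
Context {B : Banach}.
Implicit Types (A C : B -> Prop) (f : B -> B).

(** Unlike separability, this notion
    passes to subsets, which is what makes it convenient to propagate. *)
Definition approximable A : Prop :=
  exists g : nat -> B, forall x, A x -> forall eps, 0 < eps -> exists n, vdist x (g n) < eps.

Lemma approximable_incl A C : (forall x, A x -> C x) -> approximable C -> approximable A.
Proof. intros HAC [g Hg]. exists g. intros x Hx. apply Hg, HAC, Hx. Qed.

Lemma approximable_zero : approximable (fun x => x = vzero).
Proof. exists (fun _ => vzero). intros x -> eps He. exists 0%nat. now rewrite dist_self. Qed.

Lemma approximable_sum A C f : approximable A -> approximable C -> lipschitz f ->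
  approximable (fun x => exists a c, A a /\ C c /\ x = a +ᵥ f c).
Proof.
  intros [g Hg] [h Hh] [L [HL Hf]].
  exists (fun p => g (fst (Cantor.of_nat p)) +ᵥ f (h (snd (Cantor.of_nat p)))).
  intros x [a [c [Ha [Hc ->]]]] eps He.
  destruct (Hg a Ha (eps / 2)) as [i Hi]; [lra|].
  destruct (Hh c Hc (eps / (2 * L))) as [j Hj]; [apply Rdiv_lt_0_compat; lra|].
  exists (Cantor.to_nat (i, j)). rewrite Cantor.cancel_of_to; cbn [fst snd].
  eapply Rle_lt_trans; [apply dist_add|].
  assert (L * vdist c (h j) <= L * (eps / (2 * L))) by (apply Rmult_le_compat_l; lra).
  assert (L * (eps / (2 * L)) = eps / 2) by (field; lra).
  specialize (Hf c (h j)). lra.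
Qed.

Lemma approximable_image A f : approximable A -> lipschitz f ->
  approximable (fun x => exists a, A a /\ x = f a).
Proof.
  intros HA Hf. eapply approximable_incl; [|exact (approximable_sum _ _ f approximable_zero HA Hf)].
  intros x [a [Ha ->]]. exists vzero, a. now rewrite add0v.
Qed.

Lemma approximable_union (A : nat -> B -> Prop) : (forall n, approximable (A n)) ->
  approximable (fun x => exists n, A n x).
Proof.
  intro HA. destruct (choice (fun n (g : nat -> B) =>
    forall x, A n x -> forall eps, 0 < eps -> exists i, vdist x (g i) < eps) HA) as [g Hg].
  exists (fun p => g (fst (Cantor.of_nat p)) (snd (Cantor.of_nat p))).
  intros x [n Hx] eps He. destruct (Hg n x Hx eps He) as [i Hi].
  exists (Cantor.to_nat (n, i)). now rewrite Cantor.cancel_of_to.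
Qed.

Lemma approximable_closure A : approximable A -> approximable (closure B A).
Proof.
  intros [g Hg]. exists g. intros x Hx eps He.
  destruct (Hx (eps / 2)) as [y [Hy Hxy]]; [lra|].
  destruct (Hg y Hy (eps / 2)) as [n Hn]; [lra|].
  exists n. pose proof (dist_tri x y (g n)). lra.
Qed.

(** A nonempty approximable set is separable: replace each approximant [g p]
    by a point of [A] within [1/(k+1)] of it, for each [k], whenever there is one. *)
Lemma separable_of_approximable A x0 : A x0 -> approximable A -> separable B A.
Proof.
  intros Hx0 [g Hg].
  assert (Hpick : forall q : nat * nat, exists y, A y /\
    ((exists y', A y' /\ vdist y' (g (fst q)) < / INR (S (snd q))) ->
     vdist y (g (fst q)) < / INR (S (snd q)))).
  { intros [p k]. destruct (classic (exists y', A y' /\ vdist y' (g p) < / INR (S k)))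
      as [[y' Hy'] | Hnone].
    - exists y'. tauto.
    - exists x0. tauto. }
  destruct (choice _ Hpick) as [pick Hpicked].
  exists (fun r => pick (Cantor.of_nat r)). split; [intro r; apply Hpicked|].
  intros x Hx eps He.
  destruct (archimed_cor1 (eps / 2)) as [N [HN HN0]]; [lra|].
  replace N with (S (pred N)) in HN by lia.
  destruct (Hg x Hx (/ INR (S (pred N)))) as [p Hp].
  { apply Rinv_0_lt_compat, lt_0_INR. lia. }
  exists (Cantor.to_nat (p, pred N)). rewrite Cantor.cancel_of_to.
  destruct (Hpicked (p, pred N)) as [_ Hnear]. cbn [fst snd] in Hnear.
  specialize (Hnear (ex_intro _ x (conj Hx Hp))).
  pose proof (dist_tri x (g p) (pick (p, pred N))) as Htri.
  rewrite (dist_sym (g p)) in Htri. lra.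
Qed.

End CountableApproximation.

Lemma geometric_small t M eps : 0 <= t < 1 -> 0 <= M -> 0 < eps ->
  exists N, forall n, (N <= n)%nat -> M * t ^ n < eps.
Proof.
  intros Ht HM He.
  destruct (pow_lt_1_zero t ltac:(rewrite Rabs_pos_eq; lra) (eps / (M + 1))) as [N HN].
  { apply Rdiv_lt_0_compat; lra. }
  exists N. intros n Hn. specialize (HN n Hn).
  rewrite Rabs_pos_eq in HN by (apply pow_le; lra).
  assert (M * t ^ n <= M * (eps / (M + 1))) by (apply Rmult_le_compat_l; lra).
  assert (M * (eps / (M + 1)) < eps).
  { apply Rmult_lt_reg_r with (M + 1); [lra|]. field_simplify; lra. }
  lra.
Qed.

Section Convergence.
Context {B : Banach}.
Implicit Types (u v : nat -> B).

Lemma converges_unique u l l' : converges_to B u l -> converges_to B u l' -> l = l'.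
Proof.
  intros H1 H2. apply subv0_eq, vnorm_eq0.
  destruct (Rle_lt_or_eq_dec 0 (vdist l l')) as [Hpos|Hz]; [apply vnorm_nonneg| |auto].
  destruct (H1 (vdist l l' / 2)) as [N1 HN1]; [lra|].
  destruct (H2 (vdist l l' / 2)) as [N2 HN2]; [lra|].
  specialize (HN1 (N1 + N2)%nat ltac:(lia)). specialize (HN2 (N1 + N2)%nat ltac:(lia)).
  pose proof (dist_tri l (u (N1 + N2)%nat) l') as Htri.
  rewrite (dist_sym l (u _)) in Htri. lra.
Qed.

Lemma converges_add u v l m : converges_to B u l -> converges_to B v m ->
  converges_to B (fun n => u n +ᵥ v n) (l +ᵥ m).
Proof.
  intros H1 H2 eps He.
  destruct (H1 (eps / 2)) as [N1 HN1]; [lra|]. destruct (H2 (eps / 2)) as [N2 HN2]; [lra|].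
  exists (N1 + N2)%nat. intros n Hn.
  specialize (HN1 n ltac:(lia)). specialize (HN2 n ltac:(lia)).
  pose proof (dist_add (u n) (v n) l m). lra.
Qed.

Lemma limit_dist_le u l y M N : converges_to B u l ->
  (forall n, (N <= n)%nat -> vdist (u n) y <= M) -> vdist l y <= M.
Proof.
  intros Hl Hu. apply Rnot_lt_le. intro Hc.
  destruct (Hl (vdist l y - M)) as [N' HN']; [lra|].
  specialize (HN' (N + N')%nat ltac:(lia)). specialize (Hu (N + N')%nat ltac:(lia)).
  pose proof (dist_tri l (u (N + N')%nat) y) as Htri. rewrite (dist_sym l (u _)) in Htri. lra.
Qed.

Lemma converges_of_cauchy u :
  (forall eps, 0 < eps -> exists N, forall m n, (N <= m)%nat -> (N <= n)%nat -> vdist (u m) (u n) < eps) ->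
  exists l, converges_to B u l.
Proof. apply vcomplete. Qed.

Fixpoint psum u (n : nat) : B :=
  match n with O => vzero | S n => psum u n +ᵥ u n end.

Lemma psum_add u v n : psum (fun i => u i +ᵥ v i) n = psum u n +ᵥ psum v n.
Proof.
  induction n as [|n IH]; simpl; [now rewrite vadd_0|].
  rewrite IH, <- !vadd_assoc. f_equal. rewrite !vadd_assoc. f_equal. apply vadd_comm.
Qed.

Lemma psum_closed E u : closed_subspace B E -> (forall i, E (u i)) -> forall n, E (psum u n).
Proof. intros HE Hu n. induction n; simpl; [apply HE | apply sub_add; auto]. Qed.

Lemma psum_tail u K : (forall i, vnorm (u i) <= K * (1/2) ^ i) ->
  forall n j, vdist (psum u (n + j)) (psum u n) <= 2 * K * (1/2) ^ n * (1 - (1/2) ^ j).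
Proof.
  intros Hu n j. unfold Defs.dist. induction j as [|j IH].
  - rewrite Nat.add_0_r, vadd_opp, norm0. simpl. lra.
  - rewrite Nat.add_succ_r. simpl psum.
    replace (psum u (n + j) +ᵥ u (n + j)%nat -ᵥ psum u n)
      with ((psum u (n + j) -ᵥ psum u n) +ᵥ u (n + j)%nat)
      by (rewrite <- !vadd_assoc; f_equal; apply vadd_comm).
    eapply Rle_trans; [apply vnorm_triangle|].
    specialize (Hu (n + j)%nat). rewrite pow_add in Hu. simpl ((1/2) ^ S j). lra.
Qed.

Lemma series_converges u K : 0 <= K -> (forall i, vnorm (u i) <= K * (1/2) ^ i) ->
  exists L, converges_to B (psum u) L /\ vnorm L <= 2 * K.
Proof.
  intros HK Hu. pose proof (psum_tail u K Hu) as Htail.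
  assert (Hdev : forall n j, vdist (psum u (n + j)) (psum u n) <= 2 * K * (1/2) ^ n).
  { intros n j. specialize (Htail n j). pose proof (pow_lt (1/2) j ltac:(lra)).
    pose proof (pow_lt (1/2) n ltac:(lra)).
    assert (0 <= 2 * K * (1/2) ^ n) by (apply Rmult_le_pos; lra). nra. }
  destruct (converges_of_cauchy (psum u)) as [L HL].
  - intros eps He. destruct (geometric_small (1/2) (4 * K) eps) as [N HN]; [lra|lra|lra|].
    exists N. intros m n Hm Hn.
    destruct (Nat.le_exists_sub N m Hm) as [pm [-> _]].
    destruct (Nat.le_exists_sub N n Hn) as [pn [-> _]].
    rewrite !(Nat.add_comm _ N).
    pose proof (dist_tri (psum u (N + pm)) (psum u N) (psum u (N + pn))) as Htri.
    rewrite (dist_sym (psum u N)) in Htri.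
    pose proof (Hdev N pm). pose proof (Hdev N pn). specialize (HN N (le_n N)). lra.
  - exists L. split; [exact HL|]. rewrite <- (dist_0r L).
    apply (limit_dist_le _ _ _ _ 0 HL). intros n _. rewrite dist_0r.
    pose proof (Hdev 0%nat n) as Hn. simpl in Hn. rewrite dist_0r in Hn. lra.
Qed.

End Convergence.

Section Baire.
Context {B : Banach}.

Definition is_closed (F : B -> Prop) : Prop := forall x, closure B F x -> F x.

Lemma closure_closed (A : B -> Prop) : is_closed (closure B A).
Proof.
  intros x Hx eps He. destruct (Hx (eps / 2)) as [y [Hy Hxy]]; [lra|].
  destruct (Hy (eps / 2)) as [y' [Hy' Hyy']]; [lra|].
  exists y'. split; [exact Hy'|]. pose proof (dist_tri x y y'). lra.
Qed.

Lemma shrink_ball_avoiding (F : B -> Prop) : is_closed F ->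
  (forall y r, 0 < r -> exists z, vdist z y < r /\ ~ F z) ->
  forall y r, 0 < r -> exists z s, 0 < s /\ s <= r / 2 /\
    forall w, vdist w z < 2 * s -> vdist w y < r /\ ~ F w.
Proof.
  intros Hcl Hint y r Hr. destruct (Hint y r Hr) as [z [Hz HFz]].
  assert (Hgap : exists eps, 0 < eps /\ forall w, F w -> eps <= vdist z w).
  { apply Classical_Prop.NNPP. intro Hno. apply HFz, Hcl. intros eps He.
    apply Classical_Prop.NNPP. intro Hfar. apply Hno. exists eps. split; [exact He|].
    intros w Hw. apply Rnot_lt_le. intro Hlt. apply Hfar. exists w. auto. }
  destruct Hgap as [eps [He Hgap]].
  pose proof (vnorm_nonneg (z -ᵥ y)) as Hzy.
  exists z, (Rmin (eps / 2) ((r - vdist z y) / 2)).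
  pose proof (Rmin_l (eps / 2) ((r - vdist z y) / 2)).
  pose proof (Rmin_r (eps / 2) ((r - vdist z y) / 2)).
  split; [apply Rmin_pos; lra|]. split; [unfold Defs.dist in *; lra|].
  intros w Hw. split.
  - pose proof (dist_tri w z y). lra.
  - intro HFw. specialize (Hgap w HFw). rewrite dist_sym in Hgap. lra.
Qed.

Lemma nested_balls_limit (c : nat -> B) (r : nat -> R) :
  (forall k, 0 < r k <= (1/2) ^ k) ->
  (forall k w, vdist w (c (S k)) < r (S k) -> vdist w (c k) < r k) ->
  exists l, forall k, vdist l (c k) <= r k.
Proof.
  intros Hr Hnest.
  assert (Hin : forall k j, (k <= j)%nat -> vdist (c j) (c k) < r k).
  { intros k j Hkj. assert (Hball : forall w, vdist w (c j) < r j -> vdist w (c k) < r k).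
    { induction Hkj; auto. }
    apply Hball. rewrite dist_self. apply Hr. }
  destruct (converges_of_cauchy c) as [l Hl].
  - intros eps He. destruct (geometric_small (1/2) 2 eps) as [N HN]; [lra|lra|lra|].
    exists N. intros m n Hm Hn. specialize (HN N (le_n N)).
    pose proof (Hin N m Hm). pose proof (Hin N n Hn). pose proof (Hr N).
    pose proof (dist_tri (c m) (c N) (c n)) as Htri.
    rewrite (dist_sym (c N) (c n)) in Htri. lra.
  - exists l. intro k. apply (limit_dist_le c l (c k) (r k) k Hl).
    intros n Hn. left. apply Hin, Hn.
Qed.

Theorem baire (F : nat -> B -> Prop) : (forall n, is_closed (F n)) ->
  (forall x, exists n, F n x) -> exists n y r, 0 < r /\ forall z, vdist z y < r -> F n z.
Proof.
  intros Hcl Hcov. apply Classical_Prop.NNPP. intro Hnone.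
  assert (Hint : forall n y r, 0 < r -> exists z, vdist z y < r /\ ~ F n z).
  { intros n y r Hr. apply Classical_Prop.NNPP. intro Hall. apply Hnone.
    exists n, y, r. split; [exact Hr|]. intros z Hz. apply Classical_Prop.NNPP.
    intro HFz. apply Hall. exists z. auto. }
  (* [next (n, ball)] is a ball inside [ball], half as small, whose double misses [F n] *)
  destruct (choice (fun (np : nat * (B * R)) (q : B * R) => let (n, p) := np in
    0 < snd p -> 0 < snd q /\ snd q <= snd p / 2 /\
    forall w, vdist w (fst q) < 2 * snd q -> vdist w (fst p) < snd p /\ ~ F n w))
    as [next Hnext].
  { intros [n [y r]]. destruct (Rlt_dec 0 r) as [Hr|Hr].
    - destruct (shrink_ball_avoiding (F n) (Hcl n) (Hint n) y r Hr) as [z [s Hzs]].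
      exists (z, s). intros _. exact Hzs.
    - exists (y, r). intro. contradiction. }
  set (ball := fix ball k := match k with O => (@vzero B, 1) | S k => next (k, ball k) end).
  assert (Hrad : forall k, 0 < snd (ball k) <= (1/2) ^ k).
  { induction k as [|k IH]; [simpl; lra|].
    destruct (Hnext (k, ball k) (proj1 IH)) as [Hpos [Hhalf _]].
    change (ball (S k)) with (next (k, ball k)). simpl ((1/2) ^ S k). lra. }
  destruct (nested_balls_limit (fun k => fst (ball k)) (fun k => snd (ball k))) as [l Hl].
  - exact Hrad.
  - intros k w Hw. apply (proj2 (proj2 (Hnext (k, ball k) (proj1 (Hrad k))))).
    pose proof (proj1 (Hrad (S k))) as Hpos.
    change (ball (S k)) with (next (k, ball k)) in Hw, Hpos. lra.
  - destruct (Hcov l) as [n Hn].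
    apply (proj2 (proj2 (Hnext (n, ball n) (proj1 (Hrad n)))) l); [|exact Hn].
    pose proof (Hl (S n)) as HlS. pose proof (proj1 (Hrad (S n))) as Hpos.
    change (ball (S n)) with (next (n, ball n)) in HlS, Hpos. lra.
Qed.

End Baire.

Section BoundedProjection.
Context {B : Banach}.
Variables E1 E2 : B -> Prop.
Hypothesis HE1 : closed_subspace B E1.
Hypothesis HE2 : closed_subspace B E2.
Hypothesis Hcomp : Defs.complementary B E1 E2.

Lemma decomposition_unique a b c d : E1 a -> E2 b -> E1 c -> E2 d ->
  a +ᵥ b = c +ᵥ d -> b = d.
Proof.
  intros Ha Hb Hc Hd Heq. apply subv0_eq, (proj1 Hcomp); [|apply sub_sub; auto].
  replace (b -ᵥ d) with (c -ᵥ a); [apply sub_sub; auto|].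
  replace b with (a +ᵥ b -ᵥ a) by apply addvKl.
  rewrite Heq, addvAC, addvK. reflexivity.
Qed.

Definition approx_split (M : R) : Prop :=
  forall z eps, 0 < eps -> exists a b, E1 a /\ E2 b /\
    vnorm a <= M * vnorm z /\ vnorm b <= M * vnorm z /\ vdist z (a +ᵥ b) < eps.

(** Baire step: the closures of [{a + b | ‖a‖, ‖b‖ ≤ n}] cover the space, so one
    contains a ball; subtracting its centre, small vectors split approximately
    with bounded pieces. *)
Lemma small_vectors_split : exists K r, 0 <= K /\ 0 < r /\
  forall z, vnorm z < r -> forall eps, 0 < eps -> exists a b, E1 a /\ E2 b /\
    vnorm a <= K /\ vnorm b <= K /\ vdist z (a +ᵥ b) < eps.
Proof.
  set (Sn := fun (n : nat) z => exists a b, E1 a /\ E2 b /\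
    vnorm a <= INR n /\ vnorm b <= INR n /\ z = a +ᵥ b).
  destruct (baire (fun n => closure B (Sn n))) as [n [y [r [Hr Hball]]]].
  { intro n. apply closure_closed. }
  { intro x. destruct (proj2 Hcomp x) as [a [b [Ha [Hb ->]]]].
    destruct (INR_unbounded (Rmax (vnorm a) (vnorm b))) as [n Hn]. exists n.
    intros eps He. exists (a +ᵥ b). rewrite dist_self. split; [|exact He].
    exists a, b. pose proof (Rmax_l (vnorm a) (vnorm b)).
    pose proof (Rmax_r (vnorm a) (vnorm b)). repeat split; auto; lra. }
  exists (2 * INR n), r. split; [pose proof (pos_INR n); lra|]. split; [exact Hr|].
  intros z Hz eps He.
  assert (Hyz : closure B (Sn n) (y +ᵥ z)).
  { apply Hball. unfold Defs.dist. rewrite addvKl. exact Hz. }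
  assert (Hy : closure B (Sn n) y) by (apply Hball; rewrite dist_self; exact Hr).
  destruct (Hyz (eps / 2)) as [s1 [[a1 [b1 [Ha1 [Hb1 [Na1 [Nb1 ->]]]]]] D1]]; [lra|].
  destruct (Hy (eps / 2)) as [s2 [[a2 [b2 [Ha2 [Hb2 [Na2 [Nb2 ->]]]]]] D2]]; [lra|].
  exists (a1 -ᵥ a2), (b1 -ᵥ b2).
  split; [apply sub_sub; auto|]. split; [apply sub_sub; auto|].
  split; [pose proof (norm_sub_le a1 a2); lra|].
  split; [pose proof (norm_sub_le b1 b2); lra|].
  rewrite <- sub_add2.
  replace z with ((y +ᵥ z) -ᵥ y) by apply addvKl.
  pose proof (dist_sub (y +ᵥ z) y (a1 +ᵥ b1) (a2 +ᵥ b2)). lra.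
Qed.

(** Scaling the Baire step gives a linear bound valid for every vector. *)
Lemma approx_split_exists : exists M, 0 <= M /\ approx_split M.
Proof.
  destruct small_vectors_split as [K [r [HK [Hr Hsplit]]]].
  exists (2 * K / r). split; [apply Rmult_le_pos; [lra | left; apply Rinv_0_lt_compat; lra]|].
  intros z eps He.
  destruct (Rle_lt_or_eq_dec 0 (vnorm z) (vnorm_nonneg z)) as [Hz|Hz].
  2:{ exists vzero, vzero. rewrite (vnorm_eq0 z (eq_sym Hz)), norm0, vadd_0, dist_self.
      repeat split; try apply HE1; try apply HE2; lra. }
  set (lam := r / (2 * vnorm z)).
  assert (Hlam : 0 < lam) by (apply Rdiv_lt_0_compat; lra).
  destruct (Hsplit (vscal lam z)) with (eps := lam * eps) as [a [b [Ha [Hb [Na [Nb Hd]]]]]].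
  { rewrite vnorm_scal, Rabs_pos_eq by lra. unfold lam. field_simplify; lra. }
  { nra. }
  assert (Hscale : forall x : B, vnorm (vscal (/ lam) x) = / lam * vnorm x).
  { intro x. rewrite vnorm_scal, Rabs_pos_eq; [reflexivity|].
    left. apply Rinv_0_lt_compat, Hlam. }
  assert (Hbound : / lam * K = 2 * K / r * vnorm z) by (unfold lam; field; lra).
  assert (Hil : 0 < / lam) by (apply Rinv_0_lt_compat, Hlam).
  exists (vscal (/ lam) a), (vscal (/ lam) b).
  split; [apply HE1, Ha|]. split; [apply HE2, Hb|].
  rewrite !Hscale, <- Hbound.
  split; [apply Rmult_le_compat_l; lra|]. split; [apply Rmult_le_compat_l; lra|].
  unfold Defs.dist in Hd |- *.
  replace (z -ᵥ (vscal (/ lam) a +ᵥ vscal (/ lam) b))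
    with (vscal (/ lam) (vscal lam z -ᵥ (a +ᵥ b))).
  - rewrite Hscale. apply Rmult_lt_reg_l with lam; [exact Hlam|].
    rewrite <- Rmult_assoc, Rinv_r, Rmult_1_l by lra. exact Hd.
  - rewrite vscal_distr_l, vscal_assoc, Rinv_l, vscal_1 by lra.
    rewrite scal_opp, vscal_distr_l. reflexivity.
Qed.

(** Iterating an approximate splitting on the successive residuals
    [z_(k+1) = z_k - (a_k + b_k)], with errors [‖z‖ (1/2)^(k+1)], produces
    pieces decaying geometrically. *)
Lemma residual_splitting M : 0 <= M -> approx_split M -> forall z, 0 < vnorm z ->
  exists a b : nat -> B, forall k, E1 (a k) /\ E2 (b k) /\
    vnorm (a k) <= M * vnorm z * (1/2) ^ k /\ vnorm (b k) <= M * vnorm z * (1/2) ^ k /\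
    vdist z (psum (fun i => a i +ᵥ b i) k) <= vnorm z * (1/2) ^ k.
Proof.
  intros HM Hsplit z Hz.
  destruct (choice (fun (kw : nat * B) (p : B * B) => E1 (fst p) /\ E2 (snd p) /\
    vnorm (fst p) <= M * vnorm (snd kw) /\ vnorm (snd p) <= M * vnorm (snd kw) /\
    vdist (snd kw) (fst p +ᵥ snd p) < vnorm z * (1/2) ^ S (fst kw))) as [f Hf].
  { intros [k w]. destruct (Hsplit w (vnorm z * (1/2) ^ S k)) as [a [b Hab]].
    { apply Rmult_lt_0_compat; [lra | apply pow_lt; lra]. }
    exists (a, b). exact Hab. }
  set (res := fix res k := match k with
    | O => z | S k => res k -ᵥ (fst (f (k, res k)) +ᵥ snd (f (k, res k))) end).
  exists (fun k => fst (f (k, res k))), (fun k => snd (f (k, res k))).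
  assert (Hres : forall k,
    res k = z -ᵥ psum (fun i => fst (f (i, res i)) +ᵥ snd (f (i, res i))) k).
  { induction k as [|k IH]; simpl psum.
    - simpl. rewrite opp0, vadd_0. reflexivity.
    - change (res (S k)) with (res k -ᵥ (fst (f (k, res k)) +ᵥ snd (f (k, res k)))).
      rewrite IH at 1. rewrite (opp_add (psum _ k)), vadd_assoc. reflexivity. }
  assert (Hsmall : forall k, vnorm (res k) <= vnorm z * (1/2) ^ k).
  { intros [|k]; [simpl; lra|]. left. apply (Hf (k, res k)). }
  intro k. destruct (Hf (k, res k)) as [Ha [Hb [Na [Nb _]]]]. cbn [fst snd] in *.
  assert (Hdecay : M * vnorm (res k) <= M * vnorm z * (1/2) ^ k).
  { rewrite Rmult_assoc. apply Rmult_le_compat_l; auto. }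
  split; [exact Ha|]. split; [exact Hb|]. split; [lra|]. split; [lra|].
  unfold Defs.dist. rewrite <- Hres. apply Hsmall.
Qed.

(** Summing the pieces of [residual_splitting] gives an exact splitting. *)
Lemma exact_split M : 0 <= M -> approx_split M ->
  forall z, exists a b, E1 a /\ E2 b /\ z = a +ᵥ b /\ vnorm b <= 2 * M * vnorm z.
Proof.
  intros HM Hsplit z.
  destruct (Rle_lt_or_eq_dec 0 (vnorm z) (vnorm_nonneg z)) as [Hz|Hz].
  2:{ exists vzero, vzero. rewrite (vnorm_eq0 z (eq_sym Hz)), vadd_0, norm0.
      split; [apply HE1|]. split; [apply HE2|]. split; [reflexivity|lra]. }
  destruct (residual_splitting M HM Hsplit z Hz) as [a [b Hab]].
  assert (HMz : 0 <= M * vnorm z) by (apply Rmult_le_pos; lra).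
  destruct (series_converges a (M * vnorm z)) as [A [HA _]]; [exact HMz | apply Hab |].
  destruct (series_converges b (M * vnorm z)) as [Bb [HB HBn]]; [exact HMz | apply Hab |].
  exists A, Bb. split; [|split; [|split; [|lra]]].
  - apply (proj2 (proj2 (proj2 HE1)) (psum a)); [|exact HA].
    apply psum_closed; [exact HE1 | apply Hab].
  - apply (proj2 (proj2 (proj2 HE2)) (psum b)); [|exact HB].
    apply psum_closed; [exact HE2 | apply Hab].
  - apply (converges_unique (psum (fun i => a i +ᵥ b i))).
    + intros eps He. destruct (geometric_small (1/2) (vnorm z) eps) as [N HN]; [lra|lra|lra|].
      exists N. intros k Hk. rewrite dist_sym.
      specialize (HN k Hk). specialize (Hab k). lra.
    + intros eps He. destruct (converges_add _ _ _ _ HA HB eps He) as [N HN].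
      exists N. intros n Hn. rewrite psum_add. apply HN, Hn.
Qed.

Theorem projection_bounded : exists C, 0 < C /\
  forall a b, E1 a -> E2 b -> vnorm b <= C * vnorm (a +ᵥ b).
Proof.
  destruct approx_split_exists as [M [HM Hsplit]].
  exists (2 * M + 1). split; [lra|]. intros a b Ha Hb.
  destruct (exact_split M HM Hsplit (a +ᵥ b)) as [a' [b' [Ha' [Hb' [Heq Hb'n]]]]].
  rewrite (decomposition_unique a b a' b' Ha Hb Ha' Hb' Heq) at 1.
  pose proof (vnorm_nonneg (a +ᵥ b)). nra.
Qed.

End BoundedProjection.

(** Writing
    [Ainv^m x = g + f] with [g ∈ G] and [f ∈ F], the point [x - A^m f] has its
    [m]-th backward iterate in [G], while the removed vector [A^m f] has a
    forward orbit decaying like [t^(j+m) ‖Ainv^m x‖] ([A] contracts [F]). *)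
Lemma cut_component {B : Banach} (A Ainv : B -> B) (G F : B -> Prop) :
  is_aut B A Ainv -> closed_subspace B G -> closed_subspace B F ->
  Defs.complementary B G F -> uniform_contraction_on B A F ->
  exists D t, 0 <= D /\ 0 < t < 1 /\ forall m x, exists f, F f /\
    G (iter B m Ainv (x -ᵥ iter B m A f)) /\
    forall j, vnorm (iter B j A (iter B m A f)) <= D * t ^ (j + m) * vnorm (iter B m Ainv x).
Proof.
  intros Haut HG HF Hcomp [c [t [Hc [Ht Hcon]]]].
  destruct (projection_bounded G F HG HF Hcomp) as [C [HC Hproj]].
  exists (c * C), t. split; [nra|]. split; [exact Ht|].
  intros m x. destruct (proj2 Hcomp (iter B m Ainv x)) as [g [f [Hg [Hf Hgf]]]].
  exists f. split; [exact Hf|]. split.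
  - replace (x -ᵥ iter B m A f) with (iter B m A g).
    + rewrite (iter_inv_r m Ainv A g (is_aut_sym _ _ Haut)). exact Hg.
    + rewrite <- (iter_inv_r m A Ainv x Haut) at 1.
      rewrite Hgf, lin_add by (apply iter_bounded_linear, Haut). symmetry. apply addvK.
  - intro j. rewrite <- iter_add. eapply Rle_trans; [apply Hcon, Hf|].
    rewrite Hgf. specialize (Hproj g f Hg Hf). pose proof (pow_le t (j + m) ltac:(lra)).
    replace (c * C * t ^ (j + m) * vnorm (g +ᵥ f))
      with (c * t ^ (j + m) * (C * vnorm (g +ᵥ f))) by ring.
    apply Rmult_le_compat_l; [nra | exact Hproj].
Qed.

Lemma increasing_ge (s : nat -> nat) : (forall n, (s n < s (S n))%nat) -> forall n, (n <= s n)%nat.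
Proof. intros Hs n. induction n; [lia|]. specialize (Hs n). lia. Qed.

Section HyperbolicOrbits.
Context {B : Banach}.
Variables (T Tinv : B -> B) (Em Ep : B -> Prop).
Hypothesis Haut : is_aut B T Tinv.
Hypothesis Hgh : generalized_hyperbolic_dec B T Tinv Em Ep.

Lemma cut_Ep_component : exists D t, 0 <= D /\ 0 < t < 1 /\ forall m x, exists x1,
  Em (iter B m Tinv x1) /\ vdist x x1 <= D * t ^ m * vnorm (iter B m Tinv x) /\
  forall j, vnorm (iter B j T x1) <= vnorm (iter B j T x) + D * vnorm (iter B m Tinv x).
Proof.
  destruct Hgh as [HEm [HEp [Hcomp [_ [_ [HcT _]]]]]].
  destruct (cut_component T Tinv Em Ep Haut HEm HEp Hcomp HcT) as [D [t [HD [Ht Hcut]]]].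
  exists D, t. split; [exact HD|]. split; [exact Ht|]. intros m x.
  destruct (Hcut m x) as [f [_ [HG Hdecay]]].
  exists (x -ᵥ iter B m T f). split; [exact HG|]. split.
  - rewrite dist_sub_r. exact (Hdecay 0%nat).
  - intro j. rewrite lin_sub by (apply iter_bounded_linear, Haut).
    eapply Rle_trans; [apply norm_sub_le|]. apply Rplus_le_compat_l.
    eapply Rle_trans; [apply Hdecay|].
    pose proof (pow_incr t 1 (j + m) ltac:(lra)) as Hle1. rewrite pow1 in Hle1.
    pose proof (pow_le t (j + m) ltac:(lra)).
    pose proof (vnorm_nonneg (iter B m Tinv x)).
    rewrite !Rmult_assoc. apply Rmult_le_compat_l; [exact HD|]. nra.
Qed.

Lemma cut_Em_component : exists D t, 0 <= D /\ 0 < t < 1 /\ forall k x, exists x2,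
  Ep (iter B k T x2) /\ vdist x x2 <= D * t ^ k * vnorm (iter B k T x) /\
  forall m, Em (iter B m Tinv x) -> Em (iter B m Tinv x2).
Proof.
  destruct Hgh as [HEm [HEp [Hcomp [_ [HTm [_ HcTi]]]]]].
  destruct (cut_component Tinv T Ep Em (is_aut_sym _ _ Haut) HEp HEm
              (complementary_sym _ _ Hcomp) HcTi) as [D [t [HD [Ht Hcut]]]].
  exists D, t. split; [exact HD|]. split; [exact Ht|]. intros k x.
  destruct (Hcut k x) as [f [Hf [HG Hdecay]]].
  exists (x -ᵥ iter B k Tinv f). split; [exact HG|]. split.
  - rewrite dist_sub_r. exact (Hdecay 0%nat).
  - intros m Hx. rewrite lin_sub by (apply iter_bounded_linear, Haut).
    apply sub_sub; [exact HEm | exact Hx|]. rewrite <- iter_add.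
    apply iter_invariant; [exact HTm | exact Hf].
Qed.

Definition W (n : nat) (w : B) : Prop := Em (iter B n Tinv w) /\ Ep (iter B n T w).

(** Every point of [B(T)] is a limit of points of the sets [W n]: apply the two
    cuts at times [m] and [k] along which the orbit stays bounded. *)
Lemma BT_near_W x : BT B T Tinv x ->
  forall eps, 0 < eps -> exists n w, W n w /\ vdist x w < eps.
Proof.
  destruct Hgh as [_ [_ [_ [HTp [HTm _]]]]].
  destruct cut_Ep_component as [D1 [t1 [HD1 [Ht1 Hcut1]]]].
  destruct cut_Em_component as [D2 [t2 [HD2 [Ht2 Hcut2]]]].
  intros [K [k [m [HK [Hk [Hm [HkK HmK]]]]]]] eps He.
  destruct (geometric_small t1 (D1 * K) (eps / 2)) as [N1 HN1]; [lra | nra | lra |].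
  set (K2 := K + D1 * K).
  assert (HK2 : 0 <= K2) by (unfold K2; pose proof (Rmult_le_pos D1 K HD1 ltac:(lra)); lra).
  destruct (geometric_small t2 (D2 * K2) (eps / 2)) as [N2 HN2]; [lra | nra | lra |].
  destruct (Hcut1 (m N1) x) as [x1 [HEm1 [Hd1 Horbit]]].
  destruct (Hcut2 (k N2) x1) as [w [HEp2 [Hd2 Hkeep]]].
  exists (m N1 + k N2)%nat, w. split; [split|].
  - rewrite Nat.add_comm, iter_add. apply iter_invariant; [exact HTm | apply Hkeep, HEm1].
  - rewrite iter_add. apply iter_invariant; [exact HTp | exact HEp2].
  - assert (HmN : vdist x x1 < eps / 2).
    { specialize (HN1 (m N1) (increasing_ge m (fun n => proj2 (Hm n)) N1)).
      assert (D1 * t1 ^ m N1 * vnorm (iter B (m N1) Tinv x) <= D1 * t1 ^ m N1 * K).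
      { apply Rmult_le_compat_l; [apply Rmult_le_pos; [exact HD1 | apply pow_le; lra]|].
        left. apply HmK. }
      lra. }
    assert (HkN : vdist x1 w < eps / 2).
    { specialize (HN2 (k N2) (increasing_ge k (fun n => proj2 (Hk n)) N2)).
      assert (Hx1 : vnorm (iter B (k N2) T x1) <= K2).
      { eapply Rle_trans; [apply Horbit|]. pose proof (HkK N2). pose proof (HmK N1).
        unfold K2. apply Rplus_le_compat; [lra | apply Rmult_le_compat_l; lra]. }
      assert (D2 * t2 ^ k N2 * vnorm (iter B (k N2) T x1) <= D2 * t2 ^ k N2 * K2).
      { apply Rmult_le_compat_l; [apply Rmult_le_pos; [exact HD2 | apply pow_le; lra]|].
        exact Hx1. }
      lra. }
    pose proof (dist_tri x x1 w). lra.
Qed.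

Definition U (j : nat) (y : B) : Prop := Em y /\ Ep (iter B j T y).

Lemma U_zero y : U 0 y -> y = vzero.
Proof. intros [H1 H2]. apply (proj1 (proj1 (proj2 (proj2 Hgh)))); assumption. Qed.

(** [U (j+1) ⊆ E₀ + T^(-1) (U j)]: split [T y = a + b] with [a ∈ E⁻], [b ∈ E⁺];
    then [T^(-1) b ∈ E₀] and [a ∈ U j]. *)
Lemma U_succ j y : U (S j) y -> exists e u, E0 B T Em Ep e /\ U j u /\ y = e +ᵥ Tinv u.
Proof.
  destruct Hgh as [HEm [HEp [Hcomp [HTp [HTm _]]]]].
  destruct Haut as [_ [HTi [HTTi HTiT]]].
  intros [Hy HyS]. destruct (proj2 Hcomp (T y)) as [a [b [Ha [Hb Hab]]]].
  assert (Hy_eq : y = Tinv b +ᵥ Tinv a).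
  { rewrite <- lin_add, vadd_comm, <- Hab by exact HTi. symmetry. apply HTiT. }
  exists (Tinv b), a. split; [split|split; [split|exact Hy_eq]].
  - replace (Tinv b) with (y -ᵥ Tinv a) by (rewrite Hy_eq; apply addvK).
    apply sub_sub; auto.
  - rewrite HTTi. exact Hb.
  - exact Ha.
  - replace a with (T y -ᵥ b) by (rewrite Hab; apply addvK).
    rewrite lin_sub by (apply iter_bounded_linear, Haut).
    apply sub_sub; [exact HEp | rewrite <- iter_succ_r; exact HyS |].
    apply iter_invariant; assumption.
Qed.

Lemma W_image_U n w : W n w -> exists u, U (n + n) u /\ w = iter B n T u.
Proof.
  intros [HEm HEp]. exists (iter B n Tinv w).
  rewrite (iter_inv_r n T Tinv w Haut). split; [split|reflexivity]; [exact HEm|].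
  rewrite iter_add, (iter_inv_r n T Tinv w Haut). exact HEp.
Qed.

Lemma BT_zero : BT B T Tinv vzero.
Proof.
  exists 1, S, S. split; [lra|]. split; [intro; lia|]. split; [intro; lia|].
  split; intro n; rewrite lin0 by (apply iter_bounded_linear, Haut); rewrite norm0; lra.
Qed.

Lemma U_approximable : approximable (E0 B T Em Ep) -> forall j, approximable (U j).
Proof.
  intros HE0 j. induction j as [|j IH].
  - apply (approximable_incl _ _ U_zero approximable_zero).
  - eapply approximable_incl; [exact (U_succ j)|].
    apply approximable_sum; [exact HE0 | exact IH |].
    apply bounded_linear_lipschitz, Haut.
Qed.

Lemma BT_approximable : approximable (E0 B T Em Ep) -> approximable (BT B T Tinv).
Proof.
  intro HE0. apply (approximable_incl _ (closure B (fun x => exists n, W n x))).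
  - intros x Hx eps He. destruct (BT_near_W x Hx eps He) as [n [w [Hw Hxw]]].
    exists w. split; [exists n; exact Hw | exact Hxw].
  - apply approximable_closure, approximable_union. intro n.
    apply (approximable_incl _ _ (W_image_U n)), approximable_image.
    + apply U_approximable, HE0.
    + apply bounded_linear_lipschitz, iter_bounded_linear, Haut.
Qed.

End HyperbolicOrbits.

Theorem mainTheorem20 (B : Banach) (T Tinv : B -> B) (Em Ep : B -> Prop) :
  is_aut B T Tinv ->
  shifted_hyperbolic_dec B T Tinv Em Ep ->
  separable B (E0 B T Em Ep) ->
  separable B (closure B (BT B T Tinv)).
Proof.
  intros Haut [Hgh _] [d [_ Hd]].
  apply (separable_of_approximable _ vzero).
  - intros eps He. exists vzero. split; [apply BT_zero, Haut|]. now rewrite dist_self.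
  - apply approximable_closure, (BT_approximable T Tinv Em Ep Haut Hgh).
    exists d. exact Hd.
Qed.
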